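(* Let $\rho$ be an operator on $h$ and let $\rho_0$ denote $\rho$ on slice $0$. Let $\mathcal H_E\cong\mathcal H$ be an environment, $|\Phi^+\rangle=\sum_{\mathbf i}|\mathbf i\rangle|\mathbf i\rangle_E$ (sum over the product basis), and for an operator $A$ on $\mathcal H$ let $$|\mathbf A\rangle:=(A\otimes\mathbb 1_E)|\Phi^+\rangle$$ be its Choi vector. Then, for all operators $O^{(0)},\dots,O^{(N-1)}$ on $h$, $$\Big\langle\big(\textstyle\bigotimes_tO^{(t)}_t\big)^\dagger\Big|\rho_0e^{i\tilde{\mathcal S}}\Big\rangle=\mathrm{tr}\big[\rho\,O^{(N-1)}(\epsilon(N-1))\cdots O^{(1)}(\epsilon)\,O^{(0)}(0)\big],$$ where the left side is the inner product of the Choi vectors of $\big(\bigotimes_tO^{(t)}_t\big)^\dagger$ and of $\rho_0e^{i\tilde{\mathcal S}}$, and $O(s)=e^{isH}Oe^{-isH}$.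
   Context: Bosonic-like setting. Fix integers $d\ge1$, $N\ge1$, a real $\epsilon>0$, and set $T=\epsilon N$. Let $h$ be a $d$-dimensional Hilbert space with orthonormal basis $\{|i\rangle\}$ and trace $\mathrm{tr}$. The space $\mathcal H$. Let $\mathcal H=h^{\otimes N}$, with factors indexed by slices $t=0,\dots,N-1$. $A_t$ denotes $A$ acting on factor $t$, and $\bigotimes_tO^{(t)}_t=O^{(0)}\otimes\dots\otimes O^{(N-1)}$. Quantum action. Let $C$ be the cyclic shift $C|i_0\dots i_{N-1}\rangle=|i_{N-1}i_0\dots i_{N-2}\rangle$, and let $H$ be a hermitian operator on $h$. Define $$e^{i\mathcal S}=C\prod_te^{-i\epsilon H_t},\qquad e^{i\tilde{\mathcal S}}:=e^{iTH_0}e^{i\mathcal S}.$$ *)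

From HB Require Import structures.
From mathcomp Require Import all_boot all_order all_algebra.
From mathcomp Require Import complex.
From mathcomp Require Import all_classical all_reals all_analysis.
Set Implicit Arguments. Unset Strict Implicit. Unset Printing Implicit Defensive.
Import Order.TTheory GRing.Theory Num.Theory numFieldNormedType.Exports.
Local Open Scope ring_scope.
Local Open Scope classical_set_scope.
Local Open Scope complex_scope.

Section QuantumAction.
Variable R : realType.
Local Notation C := R[i].

Definition iC : C := Complex 0 1.

Definition mpow n (A : 'M[C]_n) (k : nat) : 'M[C]_n := iter k (mulmx A) 1%:M.

Definition mexp_partial n (A : 'M[C]_n) (k : nat) : 'M[C]_n :=
  \sum_(l < k) (l`!%:R)^-1 *: mpow A l.

(* matrix exponential: entrywise limit of the partial sums (limits of real and
   imaginary parts in R; convergence in C = convergence of both parts) *)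
Definition mexp n (A : 'M[C]_n) : 'M[C]_n :=
  \matrix_(i, j)
    Complex (lim (@complex.Re R (mexp_partial A k i j) @[k --> \oo]))
            (lim (@complex.Im R (mexp_partial A k i j) @[k --> \oo])).

Definition adjoint m n (A : 'M[C]_(m, n)) : 'M[C]_(n, m) := (map_mx conjc A)^T.

(* product basis of H = h^{(x) N}: multi-indices i = (i_0,...,i_{N-1}) *)
Definition Idx (d N : nat) := {ffun 'I_N -> 'I_d}.
(* operators on H are #|Idx d N| x #|Idx d N| matrices; a matrix index
   a corresponds to the basis multi-index enum_val a *)
Notation opH d N := ('M[C]_#|{: Idx d N}|).

Definition slice_op d N (t : 'I_N) (A : 'M[C]_d) : opH d N :=
  \matrix_(a, b)
    (A ((enum_val a : Idx d N) t) ((enum_val b : Idx d N) t) *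
     ([forall s : 'I_N, (s != t) ==> ((enum_val a : Idx d N) s == (enum_val b : Idx d N) s)])%:R).

Definition tensor_op d N (O : 'I_N -> 'M[C]_d) : opH d N :=
  \matrix_(a, b) \prod_(t < N) O t ((enum_val a : Idx d N) t) ((enum_val b : Idx d N) t).

(* cyclic shift C |i_0 ... i_{N-1}> = |i_{N-1} i_0 ... i_{N-2}> *)
Definition shift_idx d N (i : Idx d N) : Idx d N := [ffun t => i (ord_pred t)].
Definition cshift d N : opH d N :=
  \matrix_(a, b) ((enum_val a : Idx d N) == shift_idx (enum_val b : Idx d N))%:R.

Definition eiS d N (eps : R) (H : 'M[C]_d) : opH d N :=
  cshift d N *m \big[mulmx/1%:M]_(t < N) mexp ((- iC * eps%:C) *: slice_op t H).

Definition eiS_tilde d N (t0 : 'I_N) (eps : R) (H : 'M[C]_d) : opH d N :=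
  mexp ((iC * (eps * N%:R)%:C) *: slice_op t0 H) *m eiS N eps H.

(* |Phi^+> = sum_i |i>|i>_E  on  H (x) H_E, basis indexed by pairs *)
Definition phi_plus d N (q : Idx d N * Idx d N) : C := (q.1 == q.2)%:R.

Definition choi d N (A : opH d N) (p : Idx d N * Idx d N) : C :=
  \sum_(q : Idx d N * Idx d N)
     (A (enum_rank p.1) (enum_rank q.1) * (p.2 == q.2)%:R) * phi_plus q.

Definition inner d N (u v : Idx d N * Idx d N -> C) : C :=
  \sum_(p : Idx d N * Idx d N) conjc (u p) * v p.

Definition heis d (H : 'M[C]_d) (s : R) (O : 'M[C]_d) : 'M[C]_d :=
  mexp ((iC * s%:C) *: H) *m O *m mexp ((- iC * s%:C) *: H).

End QuantumAction.

From HB Require Import structures.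
From mathcomp Require Import all_boot all_order all_algebra.
From mathcomp Require Import complex.
From mathcomp Require Import all_classical all_reals all_analysis.
From mathcomp Require Import ring lra zify.
Import Order.TTheory GRing.Theory Num.Theory numFieldNormedType.Exports.
Local Open Scope ring_scope.

(* By the Choi isomorphism the left-hand side is the trace of
   (x)_t O^(t)_t * rho_0 e^{iS~}.  Exponentials of one-slice operators are
   slices of exponentials, so this is tr (X C Y) for tensor products X, Y and
   the cyclic shift C; expanding the trace turns it into a sum over closed
   walks through the slices, i.e. tr (M_{N-1} ... M_0) with
   M_t = e^{-i eps H} O^(t), slice 0 also carrying rho e^{iTH}.  The group law
   e^{iaH} e^{ibH} = e^{i(a+b)H}, proved through the Cauchy product of the
   exponential series, telescopes this ordered product into
   e^{-iTH} O^(N-1)(eps (N-1)) ... O^(0)(0), and cyclicity of the trace cancels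
   e^{-iTH} against e^{iTH}. *)

Lemma sum_triangle (V : nmodType) k (G : nat -> nat -> V) :
  \sum_(l < k) \sum_(i < l.+1) G (l - i)%N i
  = \sum_(i < k) \sum_(j < k) (if (i + j < k)%N then G i j else 0).
Proof.
elim: k => [|k IHk]; first by rewrite !big_ord0.
have -> : \sum_(i < k.+1) \sum_(j < k.+1) (if (i + j < k.+1)%N then G i j else 0)
    = \sum_(i < k.+1) \sum_(j < k.+1) (if (i + j < k)%N then G i j else 0)
    + \sum_(j < k.+1) \sum_(i < k.+1) (if (i + j == k)%N then G i j else 0).
  rewrite [X in _ + X]exchange_big -big_split; apply: eq_bigr => i _.
  rewrite -big_split; apply: eq_bigr => j _ /=.
  by rewrite ltnS leq_eqVlt; case: ltngtP; rewrite ?addr0 ?add0r.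
rewrite big_ord_recr /= IHk; congr (_ + _).
  rewrite big_ord_recr /= [X in _ + X]big1 ?addr0 => [|j _]; last first.
    by rewrite ltnNge leq_addr.
  by apply: eq_bigr => i _; rewrite big_ord_recr /= ltnNge leq_addl addr0.
apply: eq_bigr => j _; have le_jk : (j <= k)%N by rewrite -ltnS.
rewrite (bigD1 (inord (k - j))) /= ?inordK ?ltnS ?leq_subr // subnK // eqxx.
rewrite big1 ?addr0 // => i ne_i; case: eqP => // ij_k; case/eqP: ne_i.
by apply: val_inj; rewrite /= inordK; lia.
Qed.

Section ExpSum.
Context {F : numFieldType} {A : algType F}.
Implicit Types x y : A.

Definition expsum x k := \sum_(l < k) (l`!%:R : F)^-1 *: x ^+ l.

Definition cauchy_term x y i j :=
  ((i`!%:R : F)^-1 * (j`!%:R)^-1) *: (x ^+ i * y ^+ j).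

Lemma invfact_binomial l i : (i <= l)%N ->
  (l`!%:R : F)^-1 * 'C(l, i)%:R = ((l - i)`!%:R)^-1 * (i`!%:R)^-1.
Proof.
move=> le_il; have := congr1 (fun n => n%:R : F) (bin_fact le_il).
rewrite !natrM => <-.
have fact_neq0 n : (n`!%:R : F) != 0 by rewrite pnatr_eq0 -lt0n fact_gt0.
have bin_neq0 : ('C(l, i)%:R : F) != 0 by rewrite pnatr_eq0 -lt0n bin_gt0.
by field; rewrite !fact_neq0 bin_neq0.
Qed.

Lemma expsumM x y k :
  expsum x k * expsum y k = \sum_(i < k) \sum_(j < k) cauchy_term x y i j.
Proof.
rewrite mulr_suml; apply: eq_bigr => i _; rewrite mulr_sumr; apply: eq_bigr => j _.
by rewrite -scalerAl -scalerAr scalerA.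
Qed.

Lemma expsumD x y k : GRing.comm x y ->
  expsum (x + y) k
  = \sum_(i < k) \sum_(j < k) (if (i + j < k)%N then cauchy_term x y i j else 0).
Proof.
move=> cxy; rewrite -sum_triangle; apply: eq_bigr => l _.
rewrite exprDn_comm // scaler_sumr; apply: eq_bigr => i _.
by rewrite -(scaler_nat 'C(l, i)) scalerA invfact_binomial // -ltnS.
Qed.

Lemma expsumMD x y k : GRing.comm x y ->
  expsum x k * expsum y k - expsum (x + y) k
  = \sum_(i < k) \sum_(j < k) (if (k <= i + j)%N then cauchy_term x y i j else 0).
Proof.
move=> cxy; rewrite expsumM expsumD // -sumrB; apply: eq_bigr => i _.
rewrite -sumrB; apply: eq_bigr => j _.
by case: ltnP; rewrite ?subrr ?subr0.
Qed.

End ExpSum.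

Section NullSequences.
Context {R : realType}.
Local Open Scope classical_set_scope.

Lemma le_cvg0 {u v : nat -> R} :
  (forall k, 0 <= u k <= v k) -> v @ \oo --> 0 -> u @ \oo --> 0.
Proof. by move=> le_uv; apply: squeeze_cvgr (cvg_cst 0); apply: nearW. Qed.

Lemma dist_le_cvg {u v : nat -> R} {l} :
  (forall k, `|u k - l| <= v k) -> v @ \oo --> 0 -> u @ \oo --> l.
Proof.
move=> le_uv v0; apply: (@squeeze_cvgr _ _ _ _ (fun k => l - v k) (fun k => l + v k)).
- by apply: nearW => k; have := le_uv k; rewrite ler_distl => /andP[]; lra.
- by rewrite -[X in _ --> X]subr0; apply: cvgB => //; exact: cvg_cst.
- by rewrite -[X in _ --> X]addr0; apply: cvgD => //; exact: cvg_cst.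
Qed.

Lemma cvg_sum0 (I : finType) (u : I -> nat -> R) :
  (forall i, u i @ \oo --> 0) -> (fun k => \sum_i u i k) @ \oo --> 0.
Proof.
move=> u0; rewrite -[X in _ --> X](@big1 R 0 +%R I (index_enum I) xpredT (fun=> 0)) //.
by apply: (@cvg_big _ _ +%R 0 xpredT add_continuous) => // i _; exact: u0.
Qed.

End NullSequences.

Section MatrixExponential.
Context {R : realType}.
Local Notation C := R[i].
Local Open Scope complex_scope.
Local Open Scope classical_set_scope.
Implicit Types z w : C.

(* An l1 size on [C] instead of the modulus: it needs no square roots, bounds
   both parts and is submultiplicative, which is all the estimates below use. *)
Definition cabs1 z : R := `|complex.Re z| + `|complex.Im z|.

Lemma cabs1_ge0 z : 0 <= cabs1 z. Proof. by rewrite addr_ge0. Qed.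

Lemma Re_le_cabs1 z : `|complex.Re z| <= cabs1 z. Proof. by rewrite lerDl. Qed.

Lemma Im_le_cabs1 z : `|complex.Im z| <= cabs1 z. Proof. by rewrite lerDr. Qed.

Lemma cabs1_real (r : R) : cabs1 r%:C = `|r|.
Proof. by rewrite /cabs1 /= normr0 addr0. Qed.

Lemma cabs10 : cabs1 0 = 0. Proof. by rewrite /cabs1 !raddf0 normr0 addr0. Qed.

Lemma cabs1N z : cabs1 (- z) = cabs1 z.
Proof. by rewrite /cabs1 !raddfN !normrN. Qed.

Lemma cabs1D z w : cabs1 (z + w) <= cabs1 z + cabs1 w.
Proof.
rewrite /cabs1 !raddfD /=.
have := ler_normD (complex.Re z) (complex.Re w).
have := ler_normD (complex.Im z) (complex.Im w).
lra.
Qed.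

Lemma cabs1M z w : cabs1 (z * w) <= cabs1 z * cabs1 w.
Proof.
case: z w => a b [c e]; rewrite /cabs1 /=.
have := ler_normB (a * c) (b * e); have := ler_normD (a * e) (b * c).
rewrite !normrM.
have := normr_ge0 a; have := normr_ge0 b; have := normr_ge0 c; have := normr_ge0 e.
nra.
Qed.

Lemma cabs1_sum {I} (r : seq I) (P : pred I) (F : I -> C) :
  cabs1 (\sum_(i <- r | P i) F i) <= \sum_(i <- r | P i) cabs1 (F i).
Proof.
apply: (big_ind2 (fun z r => cabs1 z <= r)) => [|z1 r1 z2 r2 le1 le2|//].
  by rewrite cabs10.
exact: le_trans (cabs1D _ _) (lerD le1 le2).
Qed.

Definition mxnorm1 {m n} (A : 'M[C]_(m, n)) : R := \sum_i \sum_j cabs1 (A i j).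

Lemma mxnorm1_ge0 {m n} (A : 'M[C]_(m, n)) : 0 <= mxnorm1 A.
Proof. by do 2![apply: sumr_ge0 => ? _]; exact: cabs1_ge0. Qed.

Lemma cabs1_le_mxnorm1 {m n} (A : 'M[C]_(m, n)) i j : cabs1 (A i j) <= mxnorm1 A.
Proof.
have le_term (I : finType) (F : I -> R) k : (forall l, 0 <= F l) -> F k <= \sum_l F l.
  by move=> F_ge0; rewrite (bigD1 k) //= lerDl sumr_ge0.
apply: le_trans (le_term _ (fun i => \sum_j cabs1 (A i j)) i _) => [|l].
  exact: le_term (fun j => cabs1 (A i j)) j (fun l => cabs1_ge0 _).
by apply: sumr_ge0 => ? _; exact: cabs1_ge0.
Qed.

Lemma mxnorm10 m n : mxnorm1 (0 : 'M[C]_(m, n)) = 0.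
Proof. by rewrite /mxnorm1 big1 // => i _; rewrite big1 // => j _; rewrite mxE cabs10. Qed.

Lemma mxnorm1N {m n} (A : 'M[C]_(m, n)) : mxnorm1 (- A) = mxnorm1 A.
Proof. by apply: eq_bigr => i _; apply: eq_bigr => j _; rewrite mxE cabs1N. Qed.

Lemma mxnorm1D {m n} (A B : 'M[C]_(m, n)) : mxnorm1 (A + B) <= mxnorm1 A + mxnorm1 B.
Proof.
rewrite /mxnorm1 -big_split ler_sum // => i _; rewrite -big_split ler_sum // => j _.
by rewrite mxE cabs1D.
Qed.

Lemma mxnorm1Z {m n} c (A : 'M[C]_(m, n)) : mxnorm1 (c *: A) <= cabs1 c * mxnorm1 A.
Proof.
rewrite /mxnorm1 mulr_sumr ler_sum // => i _; rewrite mulr_sumr ler_sum // => j _.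
by rewrite mxE cabs1M.
Qed.

Lemma mxnorm1_sum {m n I} (r : seq I) (P : pred I) (F : I -> 'M[C]_(m, n)) :
  mxnorm1 (\sum_(i <- r | P i) F i) <= \sum_(i <- r | P i) mxnorm1 (F i).
Proof.
apply: (big_ind2 (fun A r => mxnorm1 A <= r)) => [|A1 r1 A2 r2 le1 le2|//].
  by rewrite mxnorm10.
exact: le_trans (mxnorm1D _ _) (lerD le1 le2).
Qed.

Lemma mxnorm1M {m n p} (A : 'M[C]_(m, n)) (B : 'M[C]_(n, p)) :
  mxnorm1 (A *m B) <= mxnorm1 A * mxnorm1 B.
Proof.
rewrite /mxnorm1 mulr_suml ler_sum // => i _.
apply: (@le_trans _ _ (\sum_j \sum_k cabs1 (A i k) * cabs1 (B k j))).
  apply: ler_sum => j _; rewrite mxE; apply: le_trans (cabs1_sum _ _ _) _.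
  by apply: ler_sum => k _; exact: cabs1M.
rewrite exchange_big mulr_suml ler_sum // => k _; rewrite -mulr_sumr ler_wpM2l //.
  exact: cabs1_ge0.
rewrite [leRHS](bigD1 k) //= lerDl; apply: sumr_ge0 => l _.
by apply: sumr_ge0 => ? _; exact: cabs1_ge0.
Qed.

Lemma mxnorm1_mpow {n} (A : 'M[C]_n) l :
  mxnorm1 (mpow A l) <= mxnorm1 (1%:M : 'M[C]_n) * mxnorm1 A ^+ l.
Proof.
elim: l => [|l IHl]; first by rewrite expr0 mulr1.
rewrite exprS mulrCA; apply: le_trans (mxnorm1M _ _) _.
by rewrite ler_wpM2l ?mxnorm1_ge0.
Qed.

Definition mx_cvg {m n} (S : nat -> 'M[C]_(m, n)) L :=
  (fun k => mxnorm1 (S k - L)) @ \oo --> 0.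

Lemma mx_cvg_Re {m n} {S : nat -> 'M[C]_(m, n)} {L} i j : mx_cvg S L ->
  (fun k => complex.Re (S k i j)) @ \oo --> complex.Re (L i j).
Proof.
apply: dist_le_cvg => k; rewrite -raddfB; apply: le_trans (Re_le_cabs1 _) _.
by have := cabs1_le_mxnorm1 (S k - L) i j; rewrite !mxE.
Qed.

Lemma mx_cvg_Im {m n} {S : nat -> 'M[C]_(m, n)} {L} i j : mx_cvg S L ->
  (fun k => complex.Im (S k i j)) @ \oo --> complex.Im (L i j).
Proof.
apply: dist_le_cvg => k; rewrite -raddfB; apply: le_trans (Im_le_cabs1 _) _.
by have := cabs1_le_mxnorm1 (S k - L) i j; rewrite !mxE.
Qed.

Lemma mexpE {n} (A : 'M[C]_n) L : mx_cvg (mexp_partial A) L -> mexp A = L.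
Proof.
move=> cvgAL; apply/matrixP => i j; rewrite mxE.
rewrite (cvg_lim (@Rhausdorff R) (mx_cvg_Re i j cvgAL)).
rewrite (cvg_lim (@Rhausdorff R) (mx_cvg_Im i j cvgAL)).
by case: (L i j).
Qed.

Lemma mx_cvg_near {m n} {S S' : nat -> 'M[C]_(m, n)} {L} : mx_cvg S L ->
  (fun k => mxnorm1 (S' k - S k)) @ \oo --> 0 -> mx_cvg S' L.
Proof.
move=> cvgSL near_SS'.
apply: (le_cvg0 (v := fun k => mxnorm1 (S' k - S k) + mxnorm1 (S k - L))).
  move=> k; rewrite mxnorm1_ge0 /=.
  have -> : S' k - L = (S' k - S k) + (S k - L) by rewrite addrA subrK.
  exact: mxnorm1D.
by rewrite -[X in _ --> X](addr0 0); apply: cvgD.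
Qed.

Lemma mx_cvgM {m n p} {S : nat -> 'M[C]_(m, n)} {S' : nat -> 'M[C]_(n, p)} {L L'} :
  mx_cvg S L -> mx_cvg S' L' -> mx_cvg (fun k => S k *m S' k) (L *m L').
Proof.
move=> cvgSL cvgSL'.
apply: (le_cvg0 (v := fun k => mxnorm1 (S k - L) * (mxnorm1 (S' k - L') + mxnorm1 L')
                              + mxnorm1 L * mxnorm1 (S' k - L'))).
  move=> k; rewrite mxnorm1_ge0 /=.
  have -> : S k *m S' k - L *m L' = (S k - L) *m S' k + L *m (S' k - L').
    by rewrite mulmxBl mulmxBr addrA subrK.
  apply: le_trans (mxnorm1D _ _) (lerD _ (mxnorm1M _ _)).
  apply: le_trans (mxnorm1M _ _) (ler_wpM2l (mxnorm1_ge0 _) _).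
  by rewrite -[X in mxnorm1 X](subrK L') mxnorm1D.
rewrite -[X in _ --> X](_ : 0 * (0 + mxnorm1 L') + mxnorm1 L * 0 = 0); last first.
  by rewrite mul0r mulr0 addr0.
by apply: cvgD; apply: cvgM => //; [apply: cvgD => // | ]; exact: cvg_cst.
Qed.

(* The limit is written exactly as in the definition of [mexp]. *)
Lemma mx_series_cvg {m n} (S u : nat -> 'M[C]_(m, n)) (v : nat -> R) :
  (forall k, S k = \sum_(l < k) u l) ->
  (forall l, mxnorm1 (u l) <= v l) -> cvgn (series v) ->
  mx_cvg S (\matrix_(i, j) Complex (lim (complex.Re (S k i j) @[k --> \oo]))
                                    (lim (complex.Im (S k i j) @[k --> \oo]))).
Proof.
move=> S_sum le_uv cvg_v.
have v_ge0 l : 0 <= v l := le_trans (mxnorm1_ge0 _) (le_uv l).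
have cvg_entry (f : {additive C -> R}) i j : (forall z, `|f z| <= cabs1 z) ->
    cvgn (fun k => f (S k i j)).
  move=> f_le; have -> : (fun k => f (S k i j)) = series (fun l => f (u l i j)).
    by apply/funext => k; rewrite /series /= big_mkord S_sum summxE raddf_sum.
  apply: normed_cvg; apply: (series_le_cvg _ v_ge0 _ cvg_v) => l /=; first exact: normr_ge0.
  exact: le_trans (f_le _) (le_trans (cabs1_le_mxnorm1 _ _ _) (le_uv l)).
have dist_lim0 (w : nat -> R) : cvgn w -> (fun k => `|w k - lim (w @ \oo)|) @ \oo --> 0.
  move=> cvg_w; apply/norm_cvg0P.
  by rewrite -[X in _ --> X](subrr (lim (w @ \oo))); apply: cvgB => //; exact: cvg_cst.
rewrite /mx_cvg /mxnorm1; apply: cvg_sum0 => i; apply: cvg_sum0 => j.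
rewrite [X in X @ _ --> _](_ : _ = fun k =>
    `|complex.Re (S k i j) - lim (complex.Re (S k i j) @[k --> \oo])|
  + `|complex.Im (S k i j) - lim (complex.Im (S k i j) @[k --> \oo])|).
  by rewrite -[X in _ --> X](addr0 0); apply: cvgD; apply: dist_lim0; apply: cvg_entry;
    [exact: Re_le_cabs1 | exact: Im_le_cabs1].
by apply/funext => k; rewrite /cabs1 !mxE !raddfB.
Qed.

Lemma cabs1_invfact l : cabs1 (l`!%:R^-1) = (l`!%:R : R)^-1.
Proof.
by rewrite -(rmorph_nat (real_complex R)) -fmorphV cabs1_real ger0_norm ?invr_ge0.
Qed.

Lemma mexp_cvg {n} (A : 'M[C]_n) : mx_cvg (mexp_partial A) (mexp A).
Proof.
set K := mxnorm1 (1%:M : 'M[C]_n); set a := mxnorm1 A.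
apply: (mx_series_cvg _ (fun l => l`!%:R^-1 *: mpow A l) (fun l => K * exp_coeff a l))
  => // [l|].
  apply: le_trans (mxnorm1Z _ _) _; rewrite cabs1_invfact /exp_coeff /= mulrC mulrA.
  by rewrite ler_wpM2r ?invr_ge0 //; exact: mxnorm1_mpow.
have -> : (fun l => K * exp_coeff a l) = K *: exp_coeff a by [].
exact/is_cvg_seriesZ/is_cvg_series_exp_coeff.
Qed.

Lemma mx_cvg_linear {m n p q} (f : 'M[C]_(m, n) -> 'M[C]_(p, q)) {S L} :
  {morph f : A B / A + B} -> scalable f -> mx_cvg S L -> mx_cvg (f \o S) (f L).
Proof.
move=> fD fZ cvgSL.
have f0 : f 0 = 0 by rewrite -(scale0r 0) fZ scale0r.
set K := \sum_i \sum_j mxnorm1 (f (delta_mx i j)).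
have f_le B : mxnorm1 (f B) <= mxnorm1 B * K.
  rewrite {1}(matrix_sum_delta B) (big_morph f fD f0) mulr_sumr.
  apply: le_trans (mxnorm1_sum _ _ _) (ler_sum _ _) => i _.
  rewrite (big_morph f fD f0) mulr_sumr.
  apply: le_trans (mxnorm1_sum _ _ _) (ler_sum _ _) => j _.
  rewrite fZ; apply: le_trans (mxnorm1Z _ _) _.
  by rewrite ler_wpM2r ?mxnorm1_ge0 ?cabs1_le_mxnorm1.
rewrite /mx_cvg; apply: (le_cvg0 (v := fun k => mxnorm1 (S k - L) * K)) => [k|].
  by rewrite mxnorm1_ge0 /= -scaleN1r -fZ scaleN1r -fD f_le.
by rewrite -(mul0r K); apply: cvgM => //; exact: cvg_cst.
Qed.

Lemma mexp_morph {m n} (f : 'M[C]_m -> 'M[C]_n) :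
  {morph f : A B / A + B} -> scalable f -> {morph f : A B / A *m B} ->
  f 1%:M = 1%:M -> forall A, mexp (f A) = f (mexp A).
Proof.
move=> fD fZ fM f1 A; apply: mexpE.
have f0 : f 0 = 0 by rewrite -(scale0r 0) fZ scale0r.
have f_mpow l : f (mpow A l) = mpow (f A) l.
  by elim: l => [|l IHl] /=; rewrite ?f1 // fM IHl.
have -> : mexp_partial (f A) = f \o mexp_partial A.
  apply/funext => k /=; rewrite /mexp_partial (big_morph f fD f0).
  by apply: eq_bigr => l _; rewrite fZ f_mpow.
exact: mx_cvg_linear fD fZ (mexp_cvg A).
Qed.

Lemma mpowE {n} (A : 'M[C]_n.+1) l : mpow A l = A ^+ l.
Proof. by elim: l => [|l IHl]; rewrite ?expr0 // exprS -mulmxE -IHl. Qed.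

Lemma mexp_partialE {n} (A : 'M[C]_n.+1) : mexp_partial A = expsum A.
Proof. by apply/funext => k; apply: eq_bigr => l _; rewrite mpowE. Qed.

Lemma expsum_expR (a : R) : (fun k => expsum (a : R^o) k) @ \oo --> expR a.
Proof.
have -> : (fun k => expsum (a : R^o) k) = series (exp_coeff a).
  apply/funext => k; rewrite /series /= big_mkord.
  by apply: eq_bigr => l _; rewrite /exp_coeff /= mulrC.
exact: is_cvg_series_exp_coeff.
Qed.

Lemma mxnorm1_cauchy_term {n} (A B : 'M[C]_n.+1) i j :
  mxnorm1 (cauchy_term A B i j)
  <= mxnorm1 (1%:M : 'M[C]_n.+1) ^+ 2 * cauchy_term (mxnorm1 A : R^o) (mxnorm1 B) i j.
Proof.
apply: le_trans (mxnorm1Z _ _) _.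
apply: le_trans (ler_wpM2r (mxnorm1_ge0 _) (cabs1M _ _)) _.
rewrite !cabs1_invfact -mulmxE -!mpowE.
apply: le_trans (ler_wpM2l _ (mxnorm1M _ _)) _; first by rewrite mulr_ge0 ?invr_ge0.
apply: le_trans (ler_wpM2l _ (ler_pM (mxnorm1_ge0 _) (mxnorm1_ge0 _)
                  (mxnorm1_mpow A i) (mxnorm1_mpow B j))) _.
  by rewrite mulr_ge0 ?invr_ge0.
by rewrite /cauchy_term /GRing.scale /=; lra.
Qed.

(* The defect of the Cauchy product is bounded by the same defect for the real
   series of [mxnorm1 A] and [mxnorm1 B], which tends to
   expR a * expR b - expR (a + b) = 0. *)
Lemma mexpD {n} (A B : 'M[C]_n.+1) : GRing.comm A B -> mexp A *m mexp B = mexp (A + B).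
Proof.
move=> cAB; symmetry; apply: mexpE.
apply: (mx_cvg_near (mx_cvgM (mexp_cvg A) (mexp_cvg B))).
set K := mxnorm1 (1%:M : 'M[C]_n.+1); set a := mxnorm1 A; set b := mxnorm1 B.
apply: (le_cvg0 (v := fun k => K ^+ 2 *
  (expsum (a : R^o) k * expsum (b : R^o) k - expsum (a + b : R^o) k))) => [k|].
  rewrite mxnorm1_ge0 /= !mexp_partialE -mxnorm1N opprB mulmxE !expsumMD //;
    last exact: mulrC.
  rewrite mulr_sumr; apply: le_trans (mxnorm1_sum _ _ _) (ler_sum _ _) => i _.
  rewrite mulr_sumr; apply: le_trans (mxnorm1_sum _ _ _) (ler_sum _ _) => j _.
  by case: ifP => _; rewrite ?mxnorm10 ?mulr0 ?mxnorm1_cauchy_term.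
rewrite -[X in _ --> X](_ : K ^+ 2 * (expR a * expR b - expR (a + b)) = 0); last first.
  by rewrite expRD subrr mulr0.
apply: cvgM; first exact: cvg_cst.
by apply: cvgB; [apply: cvgM|]; exact: expsum_expR.
Qed.

Lemma mexp0 {n} : mexp (0 : 'M[C]_n) = 1%:M.
Proof.
apply: mexpE; rewrite /mx_cvg -cvg_shiftS.
have -> : (fun k => mxnorm1 (mexp_partial (0 : 'M[C]_n) k.+1 - 1%:M)) = fun=> 0.
  apply/funext => k; rewrite /mexp_partial big_ord_recl big1 => [|l _].
    by rewrite /= fact0 invr1 scale1r addr0 subrr mxnorm10.
  by rewrite /= mul0mx scaler0.
exact: cvg_cst.
Qed.

End MatrixExponential.

(* MathComp only has the ring structure on ['M_n.+1]; this instance makes the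
   bigop lemmas available for ordered products of square matrices of any size. *)
HB.instance Definition _ (R : pzSemiRingType) (n : nat) :=
  Monoid.isLaw.Build 'M[R]_n 1%:M mulmx (@mulmxA R n n n n) (@mul1mx R n n) (@mulmx1 R n n).

Section TensorOperators.
Context {R : realType} {d N : nat}.
Local Notation C := R[i].
Local Notation Idx := (Idx d N).
Local Notation opH := 'M[C]_#|{: Idx}|.
Implicit Types (a b c : Idx) (M : opH) (X Y : 'I_N -> 'M[C]_d) (t : 'I_N).

Definition idx_entry M a b := M (enum_rank a) (enum_rank b).

Lemma idx_entryP M1 M2 : (forall a b, idx_entry M1 a b = idx_entry M2 a b) -> M1 = M2.
Proof.
by move=> eq12; apply/matrixP => i j; rewrite -(enum_valK i) -(enum_valK j); exact: eq12.
Qed.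

Lemma sum_enum_rank (F : 'I_#|{: Idx}| -> C) : \sum_i F i = \sum_a F (enum_rank a).
Proof. by rewrite (reindex _ (onW_bij _ (@enum_rank_bij Idx))). Qed.

Lemma idx_entry_mul M1 M2 a b :
  idx_entry (M1 *m M2) a b = \sum_c idx_entry M1 a c * idx_entry M2 c b.
Proof. by rewrite /idx_entry mxE sum_enum_rank. Qed.

Lemma mxtrace_idx M : \tr M = \sum_a idx_entry M a a.
Proof. exact: sum_enum_rank. Qed.

Lemma idx_entry1 a b : idx_entry 1%:M a b = (a == b)%:R.
Proof. by rewrite /idx_entry mxE (inj_eq enum_rank_inj). Qed.

Lemma idx_entry_tensor X a b : idx_entry (tensor_op X) a b = \prod_t X t (a t) (b t).
Proof. by rewrite /idx_entry mxE !enum_rankK. Qed.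

Lemma idx_entry_cshift a b : idx_entry (cshift R d N) a b = (a == shift_idx b)%:R.
Proof. by rewrite /idx_entry mxE !enum_rankK. Qed.

Lemma tensor_opM X Y : tensor_op X *m tensor_op Y = tensor_op (fun t => X t *m Y t).
Proof.
apply: idx_entryP => a b; rewrite idx_entry_mul idx_entry_tensor.
under [LHS]eq_bigr do rewrite !idx_entry_tensor -big_split.
rewrite -(bigA_distr_bigA (fun t j => X t (a t) j * Y t j (b t))).
by apply: eq_bigr => t _; rewrite mxE.
Qed.

Lemma tensor_op1 : tensor_op (fun=> 1%:M) = 1%:M :> opH.
Proof.
apply: idx_entryP => a b; rewrite idx_entry_tensor idx_entry1.
under eq_bigr do rewrite mxE.
case: (eqVneq a b) => [<-|neq_ab]; first by rewrite big1 // => t _; rewrite eqxx.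
have /existsP[t neq_t] : [exists t, a t != b t].
  apply: contraNT neq_ab => /existsPn eq_ab; apply/eqP/ffunP => t.
  exact/eqP/negbNE/eq_ab.
by rewrite (bigD1 t) //= (negbTE neq_t) mul0r.
Qed.

Lemma slice_op_tensor t (A : 'M[C]_d) :
  slice_op t A = tensor_op (fun s => if s == t then A else 1%:M).
Proof.
apply: idx_entryP => a b; rewrite idx_entry_tensor /idx_entry mxE !enum_rankK.
rewrite (bigD1 t) //= eqxx; congr (_ * _).
case: (boolP [forall _, _]) => [/forallP eq_ab|/forallPn[s]].
  by rewrite big1 // => s neq_st; rewrite (negbTE neq_st) mxE (implyP (eq_ab s) neq_st).
rewrite negb_imply => /andP[neq_st /negbTE neq_ab].
by rewrite (bigD1 s) //= (negbTE neq_st) mxE neq_ab mul0r.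
Qed.

Lemma slice_opM t : {morph slice_op t : A B / A *m B >-> (A *m B : opH)}.
Proof.
move=> A B; rewrite !slice_op_tensor tensor_opM; congr tensor_op; apply/funext => s.
by case: (s == t); rewrite ?mulmx1.
Qed.

Lemma slice_op1 t : slice_op t (1%:M : 'M[C]_d) = 1%:M.
Proof.
by rewrite slice_op_tensor -tensor_op1; congr tensor_op; apply/funext => s; case: ifP.
Qed.

Lemma slice_opD t : {morph slice_op t : A B / A + B >-> (A + B : opH)}.
Proof. by move=> A B; apply/matrixP => i j; rewrite !mxE mulrDl. Qed.

Lemma slice_opZ t : scalable (slice_op t : 'M[C]_d -> opH).
Proof. by move=> c A; apply/matrixP => i j; rewrite !mxE mulrA. Qed.

Lemma mexp_slice_op t (A : 'M[C]_d) : mexp (slice_op t A) = slice_op t (mexp A).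
Proof.
exact: mexp_morph (slice_op t) (slice_opD t) (slice_opZ t) (slice_opM t) (slice_op1 t) A.
Qed.

Lemma tensor_op_prod (I : Type) (r : seq I) (F : I -> 'I_N -> 'M[C]_d) :
  \big[mulmx/1%:M]_(i <- r) tensor_op (F i)
  = tensor_op (fun t => \big[mulmx/1%:M]_(i <- r) F i t).
Proof.
elim: r => [|i r IHr].
  by rewrite big_nil -tensor_op1; congr tensor_op; apply/funext => t; rewrite big_nil.
rewrite big_cons IHr tensor_opM; congr tensor_op; apply/funext => t.
by rewrite big_cons.
Qed.

Lemma prod_slice_op (A : 'M[C]_d) :
  \big[mulmx/1%:M]_(t < N) slice_op t A = tensor_op (fun=> A).
Proof.
under eq_bigr do rewrite slice_op_tensor.
rewrite tensor_op_prod; congr tensor_op; apply/funext => s.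
by rewrite -big_mkcond (big_pred1 s) // => t; exact: eq_sym.
Qed.

Lemma mxtrace_tensor_cshift X Y :
  \tr (tensor_op X *m (cshift R d N *m tensor_op Y))
  = \sum_(c : Idx) \prod_(t < N) (Y t *m X t) (c t) (c (ord_pred t)).
Proof.
rewrite mulmxA mxtrace_idx; under eq_bigr do rewrite idx_entry_mul.
rewrite exchange_big; apply: eq_bigr => c _.
have shift_col a : idx_entry (tensor_op X *m cshift R d N) a c
                   = idx_entry (tensor_op X) a (shift_idx c).
  rewrite idx_entry_mul (bigD1 (shift_idx c)) //= idx_entry_cshift eqxx mulr1.
  by rewrite big1 ?addr0 // => b neq_b; rewrite idx_entry_cshift (negbTE neq_b) mulr0.
under eq_bigr do rewrite shift_col !idx_entry_tensor -big_split.
rewrite -(bigA_distr_bigA (fun t j => X t j (shift_idx c t) * Y t (c t) j)).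
apply: eq_bigr => t _; rewrite mxE; apply: eq_bigr => j _.
by rewrite ffunE mulrC.
Qed.

Lemma choiE M p : choi M p = M (enum_rank p.1) (enum_rank p.2).
Proof.
rewrite /choi (bigD1 (p.2, p.2)) //= /phi_plus /= !eqxx !mulr1 big1 ?addr0 // => -[q1 q2].
rewrite /phi_plus /= xpair_eqE.
case: (eqVneq q2 p.2) => [->|_]; last by rewrite mulr0 mul0r.
by rewrite andbT => /negbTE ->; rewrite mulr0.
Qed.

Lemma inner_choi_adjoint M1 M2 : inner (choi (adjoint M1)) (choi M2) = \tr (M1 *m M2).
Proof.
rewrite /inner; under eq_bigr => p _ do rewrite !choiE /adjoint !mxE conjcK.
rewrite -(pair_bigA _ (fun a b => idx_entry M1 b a * idx_entry M2 a b)) /=.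
rewrite mxtrace_mulC mxtrace_idx; apply: eq_bigr => a _; rewrite idx_entry_mul.
by apply: eq_bigr => b _; rewrite mulrC.
Qed.

End TensorOperators.

Section CyclicTrace.
Context {R : realType} {d : nat}.
Local Notation C := R[i].
Implicit Types (M : nat -> 'M[C]_d) (x y z : 'I_d).

Definition descprod n M := \big[mulmx/1%:M]_(t < n) M (n - t.+1)%N.

Lemma descprodS n M : descprod n.+1 M = M n *m descprod n M.
Proof. by rewrite /descprod big_ord_recl subn1. Qed.

Lemma descprodSr n M : descprod n.+1 M = descprod n (fun k => M k.+1) *m M 0%N.
Proof.
rewrite /descprod big_ord_recr /= subnn; congr (_ *m _).
by apply: eq_bigr => t _; rewrite /= subSn.
Qed.

(* [walk x g k] is the [k]-th vertex of the walk [x, g 0, ..., g (n - 1)]. *)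
Definition walk {n} x (g : {ffun 'I_n -> 'I_d}) k :=
  if k is k'.+1 then oapp g x (insub k') else x.

Definition fcons {n} x (g : {ffun 'I_n -> 'I_d}) : {ffun 'I_n.+1 -> 'I_d} :=
  [ffun j : 'I_n.+1 => walk x g j].

Lemma walk_fcons n x z (g : {ffun 'I_n -> 'I_d}) k :
  (k <= n)%N -> walk x (fcons z g) k.+1 = walk z g k.
Proof. by move=> le_kn; rewrite /= insubT /= ffunE. Qed.

Lemma sum_fcons n (F : {ffun 'I_n.+1 -> 'I_d} -> C) :
  \sum_f F f = \sum_x \sum_(g : {ffun 'I_n -> 'I_d}) F (fcons x g).
Proof.
rewrite pair_bigA /=; apply: (reindex (fun p => fcons p.1 p.2)).
exists (fun f : {ffun 'I_n.+1 -> 'I_d} => (f ord0, [ffun j => f (lift ord0 j)])).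
  move=> [x g] _ /=; rewrite ffunE; congr (_, _); apply/ffunP => j.
  by rewrite !ffunE /= insubT => [|lt_jn]; [rewrite add0n | congr (g _); apply: val_inj].
move=> f _; apply/ffunP => -[[|k] lt_kn]; rewrite ffunE /=.
  by congr (f _); exact: val_inj.
by rewrite insubT /= ffunE; congr (f _); exact: val_inj.
Qed.

Lemma sum_walks n M x y :
  \sum_(g : {ffun 'I_n -> 'I_d})
     (walk x g n == y)%:R * \prod_(t < n) M t (walk x g t.+1) (walk x g t)
  = descprod n M y x.
Proof.
elim: n M x => [|n IHn] M x.
  rewrite (eq_bigr (fun=> (x == y)%:R)) => [|g _]; last by rewrite big_ord0 mulr1.
  by rewrite sumr_const card_ffun !card_ord expn0 /descprod big_ord0 mxE eq_sym.
rewrite descprodSr sum_fcons mxE; apply: eq_bigr => z _.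
rewrite -IHn mulr_suml; apply: eq_bigr => g _.
rewrite (walk_fcons _ x z g n (leqnn n)) big_ord_recl (walk_fcons _ x z g 0) //.
rewrite -mulrA [M 0%N z x * _]mulrC; congr (_ * (_ * _)); apply: eq_bigr => t _.
by rewrite lift0 !walk_fcons // ltnW.
Qed.

Lemma trace_cycle n M :
  \sum_(c : {ffun 'I_n.+1 -> 'I_d}) \prod_(t < n.+1) M t (c t) (c (ord_pred t))
  = \tr (M 0%N *m descprod n (fun k => M k.+1)).
Proof.
rewrite sum_fcons /mxtrace; apply: eq_bigr => x _; rewrite mxE.
under [RHS]eq_bigr => y _ do rewrite -sum_walks mulr_sumr.
rewrite exchange_big; apply: eq_bigr => g _.
rewrite (bigD1 (walk x g n)) //= eqxx mul1r [X in _ + X]big1 ?addr0; last first.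
  by move=> y neq_y; rewrite eq_sym (negbTE neq_y) mul0r mulr0.
rewrite big_ord_recl !ffunE; congr (_ * _).
  by congr (M 0%N x (walk x g _)); rewrite /= modn_small.
apply: eq_bigr => t _; rewrite !ffunE lift0; congr (M t.+1 _ (walk x g _)).
by rewrite /= add0n modnDr modn_small // ltnS ltnW.
Qed.

End CyclicTrace.

Section OneParameterGroup.
Context {R : realType} {d : nat} (F : R -> 'M[R[i]]_d).
Hypotheses (FD : forall a b, F a *m F b = F (a + b)) (F0 : F 0 = 1%:M).

Lemma descprod_telescope eps n (A : nat -> 'M[R[i]]_d) :
  descprod n (fun k => F (- eps) *m A k)
  = F (- (eps * n%:R)) *m descprod n (fun k => F (eps * k%:R) *m A k *m F (- (eps * k%:R))).
Proof.
elim: n => [|n IHn]; first by rewrite mulr0 oppr0 F0 mul1mx /descprod !big_ord0.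
rewrite !descprodS IHn !mulmxA FD; congr (F _ *m _ *m _ *m _).
by rewrite -addn1 natrD; ring.
Qed.

Lemma mxtrace_descprod_conj eps n (A : nat -> 'M[R[i]]_d) B :
  \tr (descprod n (fun k => F (- eps) *m A k) *m (B *m F (eps * n%:R)))
  = \tr (B *m descprod n (fun k => F (eps * k%:R) *m A k *m F (- (eps * k%:R)))).
Proof.
rewrite descprod_telescope mxtrace_mulC mulmxA; congr (\tr (_ *m _)).
by rewrite -mulmxA FD addrN F0 mulmx1.
Qed.

End OneParameterGroup.

Section HeisenbergPicture.
Context {R : realType} {d : nat} (H : 'M[R[i]]_d.+1).
Local Open Scope complex_scope.

Definition expiH (s : R) := mexp ((iC R * s%:C) *: H).

Lemma expiHD a b : expiH a *m expiH b = expiH (a + b).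
Proof.
rewrite /expiH mexpD ?rmorphD -?scalerDl ?mulrDr //.
by rewrite /GRing.comm -!scalerAl -!scalerAr !scalerA mulrC.
Qed.

Lemma expiH0 : expiH 0 = 1%:M.
Proof. by rewrite /expiH mulr0 scale0r mexp0. Qed.

Lemma mexp_NiH (s : R) : mexp ((- iC R * s%:C) *: H) = expiH (- s).
Proof. by rewrite /expiH rmorphN mulrN mulNr. Qed.

Lemma heisE s O : heis H s O = expiH s *m O *m expiH (- s).
Proof. by rewrite /heis mexp_NiH. Qed.

End HeisenbergPicture.

Theorem corollary3 (R : realType) (d N : nat) (hd : (0 < d)%N) (hN : (0 < N)%N)
  (eps : R) (heps : 0 < eps) (H : 'M[R[i]]_d) (hH : adjoint H = H)
  (rho : 'M[R[i]]_d) (O : 'I_N -> 'M[R[i]]_d) :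
  inner (choi (adjoint (tensor_op O)))
        (choi (slice_op (Ordinal hN) rho *m eiS_tilde (Ordinal hN) eps H))
  = \tr (rho *m \big[mulmx/1%:M]_(t < N)
                   heis H (eps * (rev_ord t : nat)%:R) (O (rev_ord t))).
Proof.
case: d hd H rho O hH => // d _ H rho O _.
case: N hN O => // n hN O; have -> : Ordinal hN = ord0 by exact: val_inj.
set T := eps * n.+1%:R.
set A := fun k => O (inord k); have OA (t : 'I_n.+1) : O t = A t by rewrite /A inord_val.
set M := fun k => expiH H (- eps) *m (A k *m if k is 0 then rho *m expiH H T else 1%:M).
have -> : \big[mulmx/1%:M]_(t < n.+1) heis H (eps * (rev_ord t : nat)%:R) (O (rev_ord t))
          = descprod n.+1 (fun k => expiH H (eps * k%:R) *m A k *m expiH H (- (eps * k%:R))).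
  by apply: eq_bigr => t _; rewrite heisE OA.
rewrite inner_choi_adjoint /eiS_tilde /eiS -slice_opZ mexp_slice_op.
under eq_bigr do rewrite -slice_opZ mexp_slice_op mexp_NiH.
rewrite prod_slice_op (mulmxA (slice_op _ rho)) -slice_opM !slice_op_tensor mulmxA tensor_opM.
rewrite mxtrace_tensor_cshift
  (eq_bigr (fun c : Idx d.+1 n.+1 => \prod_(t < n.+1) M t (c t) (c (ord_pred t)))).
  rewrite trace_cycle.
  have -> : (fun k => M k.+1) = fun k => expiH H (- eps) *m A k.+1.
    by apply/funext => k; rewrite /M mulmx1.
  have -> : M 0%N = expiH H (- eps) *m A 0%N *m (rho *m expiH H T) by rewrite /M mulmxA.
  rewrite mxtrace_mulC (mulmxA (descprod _ _)).
  rewrite -[X in X *m (rho *m expiH H T)](descprodSr n (fun k => expiH H (- eps) *m A k)).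
  exact: (mxtrace_descprod_conj _ (expiHD H) (expiH0 H)).
move=> c _; apply: eq_bigr => t _; rewrite /M OA.
by case: t => -[|k] lt_kn /=; rewrite ?mulmx1.
Qed.
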